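(* Let $\mathcal{P}=\{G^{\rm z},c^{\rm z},A^{\rm z},b^{\rm z}\}\subset\mathbb{R}^n$ be a nonempty constrained zonotope, and let $\mathcal{C}=\{G^{\rm c},c^{\rm c}\}=\{G^{\rm c}\xi+c^{\rm c}:\xi\in[-1,1]^n\}\subset\mathbb{R}^n$, with $G^{\rm c}\in\mathbb{R}^{n\times n}$ and $c^{\rm c}\in\mathbb{R}^n$, be a parallelotope with $\mathcal{P}\subseteq\mathcal{C}$. For each $i=1,\ldots,n$ solve the linear programs $$\zeta^{\rm L}_i=\min_{\xi^{\rm c},\xi^{\rm z}}\Big\{\xi^{\rm c}_i:\ G^{\rm c}_{i,:}\xi^{\rm c}+c^{\rm c}_i=G^{\rm z}_{i,:}\xi^{\rm z}+c^{\rm z}_i,\ \xi^{\rm c}\in[-1,1]^n,\ \xi^{\rm z}\in\mathcal{B}(A^{\rm z},b^{\rm z})\Big\},$$ $$\zeta^{\rm U}_i=\max_{\xi^{\rm c},\xi^{\rm z}}\Big\{\xi^{\rm c}_i:\ G^{\rm c}_{i,:}\xi^{\rm c}+c^{\rm c}_i=G^{\rm z}_{i,:}\xi^{\rm z}+c^{\rm z}_i,\ \xi^{\rm c}\in[-1,1]^n,\ \xi^{\rm z}\in\mathcal{B}(A^{\rm z},b^{\rm z})\Big\}.$$ Define $\mathrm{rad}=\tfrac12(\zeta^{\rm U}-\zeta^{\rm L})\in\mathbb{R}^n$, $\mathrm{mid}=\tfrac12(\zeta^{\rm L}+\zeta^{\rm U})\in\mathbb{R}^n$, and the zonotope $$\mathcal{T}=\{G^{\rm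 c}\,\mathrm{diag}(\mathrm{rad}),\ c^{\rm c}+G^{\rm c}\,\mathrm{mid}\}=\{G^{\rm c}\,\mathrm{diag}(\mathrm{rad})\xi+c^{\rm c}+G^{\rm c}\,\mathrm{mid}:\xi\in[-1,1]^n\}.$$ Then $\mathcal{T}$ is a parallelotope with $\mathcal{T}\supseteq\mathcal{P}$ (the paper calls $\mathcal{T}$ the optimal parallelotope obtained in this way).
   Context: A constrained zonotope (CZ) with generator matrix $G\in\mathbb{R}^{n\times n_g}$, center $c\in\mathbb{R}^n$, and constraints $A\in\mathbb{R}^{n_h\times n_g}$, $b\in\mathbb{R}^{n_h}$ is the set $\{G,c,A,b\}=\{G\xi+c:\xi\in\mathcal{B}(A,b)\}$, where $\mathcal{B}(A,b)=\{\xi\in[-1,1]^{n_g}:A\xi=b\}$. A zonotope $\{G,c\}$ is a CZ without equality constraints. $M_{i,:}$ denotes the $i$th row of a matrix $M$, and $\mathrm{diag}(v)$ the diagonal matrix with diagonal $v$. *)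

From mathcomp Require Import all_boot all_order all_algebra.
Set Implicit Arguments. Unset Strict Implicit. Unset Printing Implicit Defensive.
Import Order.TTheory GRing.Theory Num.Theory.
Local Open Scope ring_scope.

Definition unit_box (R : realFieldType) (k : nat) (xi : 'cV[R]_k) : Prop :=
  forall i : 'I_k, -1 <= xi i 0 <= 1.

Definition cz_ball (R : realFieldType) (nh ng : nat)
  (A : 'M[R]_(nh, ng)) (b : 'cV[R]_nh) (xi : 'cV[R]_ng) : Prop :=
  unit_box xi /\ A *m xi = b.

Definition conzono (R : realFieldType) (n ng nh : nat)
  (G : 'M[R]_(n, ng)) (c : 'cV[R]_n) (A : 'M[R]_(nh, ng)) (b : 'cV[R]_nh)
  (x : 'cV[R]_n) : Prop :=
  exists xi, cz_ball A b xi /\ x = G *m xi + c.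

Definition zono (R : realFieldType) (n ng : nat)
  (G : 'M[R]_(n, ng)) (c : 'cV[R]_n) (x : 'cV[R]_n) : Prop :=
  exists xi, unit_box xi /\ x = G *m xi + c.

Definition is_parallelotope (R : realFieldType) (n : nat)
  (S : 'cV[R]_n -> Prop) : Prop :=
  exists (G : 'M[R]_n) (c : 'cV[R]_n), forall x, S x <-> zono G c x.

Definition lp_feasible (R : realFieldType) (n ng nh : nat)
  (Gc : 'M[R]_n) (cc : 'cV[R]_n)
  (Gz : 'M[R]_(n, ng)) (cz : 'cV[R]_n) (Az : 'M[R]_(nh, ng)) (bz : 'cV[R]_nh)
  (i : 'I_n) (xic : 'cV[R]_n) (xiz : 'cV[R]_ng) : Prop :=
  (Gc *m xic) i 0 + cc i 0 = (Gz *m xiz) i 0 + cz i 0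
  /\ unit_box xic /\ cz_ball Az bz xiz.

Definition lp_min (R : realFieldType) (n ng nh : nat)
  (Gc : 'M[R]_n) (cc : 'cV[R]_n)
  (Gz : 'M[R]_(n, ng)) (cz : 'cV[R]_n) (Az : 'M[R]_(nh, ng)) (bz : 'cV[R]_nh)
  (i : 'I_n) (v : R) : Prop :=
  (exists xic xiz, lp_feasible Gc cc Gz cz Az bz i xic xiz /\ xic i 0 = v) /\
  (forall xic xiz, lp_feasible Gc cc Gz cz Az bz i xic xiz -> v <= xic i 0).

Definition lp_max (R : realFieldType) (n ng nh : nat)
  (Gc : 'M[R]_n) (cc : 'cV[R]_n)
  (Gz : 'M[R]_(n, ng)) (cz : 'cV[R]_n) (Az : 'M[R]_(nh, ng)) (bz : 'cV[R]_nh)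
  (i : 'I_n) (v : R) : Prop :=
  (exists xic xiz, lp_feasible Gc cc Gz cz Az bz i xic xiz /\ xic i 0 = v) /\
  (forall xic xiz, lp_feasible Gc cc Gz cz Az bz i xic xiz -> xic i 0 <= v).

(* rad = (zU - zL)/2 as a row (for diag_mx), mid = (zL + zU)/2 *)
Definition rad_vec (R : realFieldType) (n : nat) (zL zU : 'I_n -> R) : 'rV[R]_n :=
  \row_i ((zU i - zL i) / 2).
Definition mid_vec (R : realFieldType) (n : nat) (zL zU : 'I_n -> R) : 'cV[R]_n :=
  \col_i ((zL i + zU i) / 2).

From mathcomp Require Import all_boot all_order all_algebra.
From mathcomp Require Import ring lra.
Set Implicit Arguments. Unset Strict Implicit. Unset Printing Implicit Defensive.
Import Order.TTheory GRing.Theory Num.Theory.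
Local Open Scope ring_scope.

(* Every point x of P has coordinates xi^c in the parallelotope C and xi^z in
   B(A^z, b^z); the pair (xi^c, xi^z) is feasible for all 2n linear programs, so
   zL <= xi^c <= zU componentwise.  The box [zL, zU] is the image of [-1,1]^n
   under xi |-> diag(rad) xi + mid, and applying x = G^c xi^c + c^c maps it into T. *)

Lemma rescale_to_unit_interval (R : realFieldType) (a b t : R) :
  a <= t <= b -> exists2 s, -1 <= s <= 1 & t = (b - a) / 2 * s + (a + b) / 2.
Proof.
case/andP=> le_at le_tb; have [width0 | width_neq0] := eqVneq (b - a) 0.
  by exists 0; lra.
exists ((t - (a + b) / 2) / ((b - a) / 2)).
  have rad_gt0 : 0 < (b - a) / 2 by lra.
  by rewrite ler_pdivlMr // ler_pdivrMr //; lra.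
have rad_neq0 : (b - a) / 2 != 0 by apply/eqP; lra.
by rewrite mulrC divfK //; ring.
Qed.

Lemma box_sub_zono_rad_mid (R : realFieldType) (n : nat) (zL zU : 'I_n -> R)
    (xi : 'cV[R]_n) :
  (forall i, zL i <= xi i 0 <= zU i) ->
  zono (diag_mx (rad_vec zL zU)) (mid_vec zL zU) xi.
Proof.
move=> in_box.
have coord i := sig2_eqW (rescale_to_unit_interval (in_box i)).
exists (\col_i sval (coord i)); split => [i|].
  by rewrite mxE; case: (coord i).
apply/matrixP => i j; rewrite ord1 mul_diag_mx !mxE.
by case: (coord i) => s _ /= ->.
Qed.

Lemma zono_affine_image (R : realFieldType) (n m k : nat) (M : 'M[R]_(n, m))
    (d : 'cV[R]_n) (G : 'M[R]_(m, k)) (c y : 'cV[R]_m) :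
  zono G c y -> zono (M *m G) (d + M *m c) (M *m y + d).
Proof.
case=> xi [box_xi ->]; exists xi; split => //.
by rewrite mulmxDr mulmxA addrCA addrC.
Qed.

Lemma lp_feasible_of_common_point (R : realFieldType) (n ng nh : nat)
    (Gc : 'M[R]_n) (cc : 'cV[R]_n) (Gz : 'M[R]_(n, ng)) (cz : 'cV[R]_n)
    (Az : 'M[R]_(nh, ng)) (bz : 'cV[R]_nh) (xic : 'cV[R]_n) (xiz : 'cV[R]_ng) :
  unit_box xic -> cz_ball Az bz xiz -> Gc *m xic + cc = Gz *m xiz + cz ->
  forall i, lp_feasible Gc cc Gz cz Az bz i xic xiz.
Proof.
move=> box_c ball_z same_point i; split; last by split.
by have := congr1 (fun v : 'cV[R]_n => v i 0) same_point; rewrite !mxE.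
Qed.

Theorem proposition3 (R : realFieldType) (n ng nh : nat)
  (Gz : 'M[R]_(n, ng)) (cz : 'cV[R]_n) (Az : 'M[R]_(nh, ng)) (bz : 'cV[R]_nh)
  (Gc : 'M[R]_n) (cc : 'cV[R]_n)
  (zL zU : 'I_n -> R) :
  (exists x, conzono Gz cz Az bz x) ->
  (forall x, conzono Gz cz Az bz x -> zono Gc cc x) ->
  (forall i, lp_min Gc cc Gz cz Az bz i (zL i)) ->
  (forall i, lp_max Gc cc Gz cz Az bz i (zU i)) ->
  is_parallelotope (zono (Gc *m diag_mx (rad_vec zL zU)) (cc + Gc *m mid_vec zL zU))
  /\ (forall x, conzono Gz cz Az bz x ->
        zono (Gc *m diag_mx (rad_vec zL zU)) (cc + Gc *m mid_vec zL zU) x).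
Proof.
(* Nonemptiness of P only guarantees that the optima zL, zU exist, which the
   last two hypotheses already assert. *)
move=> _ P_sub_C zL_min zU_max; split.
  by exists (Gc *m diag_mx (rad_vec zL zU)), (cc + Gc *m mid_vec zL zU).
move=> x Px; have [xic [box_c x_c]] := P_sub_C x Px.
have [xiz [ball_z x_z]] := Px.
have feasible := lp_feasible_of_common_point box_c ball_z (etrans (esym x_c) x_z).
have xic_in_box i : zL i <= xic i 0 <= zU i.
  by rewrite ((zL_min i).2 _ _ (feasible i)) ((zU_max i).2 _ _ (feasible i)).
by rewrite x_c; apply/zono_affine_image/box_sub_zono_rad_mid.
Qed.
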